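(* Let $\mathcal{S}\colon\mathbf{Conv}\to\mathbf{Mod}_{\mathbb{R}_{\geq0}}$ be the left adjoint to the inclusion functor $\mathbf{Mod}_{\mathbb{R}_{\geq0}}\to\mathbf{Conv}$, given on a convex set $X$ by $\mathcal{S}(X)=\{0\}+\mathbb{R}_{>0}\times X$ with $u+0=u=0+u$, $(s,x)+(t,y)=\big(s+t,\ \tfrac{s}{s+t}x+\tfrac{t}{s+t}y\big)$, and scalar multiplication $s\bullet 0=0$, $0\bullet u=0$, $s\bullet(t,x)=(s t,x)$ for $s\neq0$. For a finite-dimensional complex Hilbert space $H$, the transpose of the inclusion $\mathcal{DM}(H)\hookrightarrow\mathcal{Pos}(H)$ (an affine map) is an isomorphism $\mathcal{S}(\mathcal{DM}(H))\cong\mathcal{Pos}(H)$ in $\mathbf{Mod}_{\mathbb{R}_{\geq0}}$. Consequently $\mathcal{S}\circ\mathcal{DM}\cong\mathcal{Pos}$ as functors $\mathbf{FdHilb}_{\mathrm{Un}}\to\mathbf{Mod}_{\mathbb{R}_{\geq0}}$.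
   Context: $\mathbf{Conv}$ is the category of convex sets and affine maps (algebras of the finitely supported distribution monad on sets). $\mathbf{Mod}_{\mathbb{R}_{\geq0}}$ is the category of modules over the semiring $\mathbb{R}_{\geq0}$ (commutative monoids with unital, associative scalar multiplication by non-negative reals, additive in each argument) and linear maps; every such module is a convex set via its linear structure, giving the inclusion functor. $\mathbf{FdHilb}_{\mathrm{Un}}$ is the category of finite-dimensional complex Hilbert spaces and unitary maps. $\mathcal{Pos}(H)$ is the $\mathbb{R}_{\ge0}$-module of positive operators on $H$ ($\langle Ax,x\rangle\ge0$ for all $x$), and $\mathcal{DM}(H)=\{A\in\mathcal{Pos}(H)\mid \mathrm{tr}(A)=1\}$ the convex set of density operators; both are functorial in unitaries $U$ via $A\mapsto UAU^\dagger$. *)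

From HB Require Import structures.
From mathcomp Require Import all_boot all_order all_algebra.
From mathcomp Require Import complex.
From mathcomp Require Import reals.
Set Implicit Arguments. Unset Strict Implicit. Unset Printing Implicit Defensive.
Import Order.TTheory GRing.Theory Num.Theory.
Local Open Scope ring_scope.

(* A finite-dimensional complex Hilbert space H is modelled as C^n with
   C = R[i], R the real numbers (any realType), and the standard inner
   product <x,y> = \sum_i x_i * conj(y_i). *)

Definition herm_adj (R : realType) (n : nat) (A : 'M[R[i]]_n) : 'M[R[i]]_n :=
  (map_mx Num.conj A)^T.

Definition qform (R : realType) (n : nat) (A : 'M[R[i]]_n) (x : 'cV[R[i]]_n)
  : R[i] := \sum_i (A *m x) i ord0 * Num.conj (x i ord0).

Definition is_pos (R : realType) (n : nat) (A : 'M[R[i]]_n) : Prop :=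
  forall x : 'cV[R[i]]_n, 0 <= qform A x.

Definition is_density (R : realType) (n : nat) (A : 'M[R[i]]_n) : Prop :=
  is_pos A /\ \tr A = 1.

(* Morphisms of FdHilb_Un on C^n: unitary matrices *)
Definition unitary_mx (R : realType) (n : nat) (U : 'M[R[i]]_n) : Prop :=
  U *m herm_adj U = 1%:M /\ herm_adj U *m U = 1%:M.

Definition rscale (R : realType) (n : nat) (s : R) (A : 'M[R[i]]_n) :
  'M[R[i]]_n := (s%:C)%C *: A.

(* ---- The free R>=0-module S(X) = {0} + R_{>0} x X, for X = DM(H). ----
   Elements are represented in the ambient type; [S_valid] carves out the
   genuine elements (0, or (s, rho) with s > 0 and rho a density operator). *)
Inductive Selt (R : realType) (n : nat) : Type :=
  | S0 : Selt R n
  | Spt : R -> 'M[R[i]]_n -> Selt R n.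
Arguments S0 {R n}.

Definition S_valid (R : realType) (n : nat) (u : Selt R n) : Prop :=
  match u with
  | S0 => True
  | Spt s rho => 0 < s /\ is_density rho
  end.

Definition S_add (R : realType) (n : nat) (u v : Selt R n) : Selt R n :=
  match u, v with
  | S0, _ => v
  | _, S0 => u
  | Spt s x, Spt t y =>
      Spt (s + t) (rscale (s / (s + t)) x + rscale (t / (s + t)) y)
  end.

Definition S_scale (R : realType) (n : nat) (s : R) (u : Selt R n) : Selt R n :=
  match u with
  | S0 => S0
  | Spt t x => if s == 0 then S0 else Spt (s * t) x
  end.

(* Functorial action S(DM(U)) of a unitary U: (s, rho) |-> (s, U rho U^dag) *)
Definition S_map (R : realType) (n : nat) (U : 'M[R[i]]_n) (u : Selt R n)
  : Selt R n :=
  match u with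
  | S0 => S0
  | Spt s rho => Spt s (U *m rho *m herm_adj U)
  end.

(* Transpose (under the adjunction S -| inclusion) of the affine inclusion
   DM(H) -> Pos(H): the unique linear extension 0 |-> 0, (s,rho) |-> s rho. *)
Definition transpose_incl (R : realType) (n : nat) (u : Selt R n)
  : 'M[R[i]]_n :=
  match u with
  | S0 => 0
  | Spt s rho => rscale s rho
  end.

From HB Require Import structures.
From mathcomp Require Import all_boot all_order all_algebra.
From mathcomp Require Import complex.
From mathcomp Require Import reals.
Import Order.TTheory GRing.Theory Num.Theory.
Local Open Scope ring_scope.

(* A positive operator has nonnegative trace, and trace 0 only if it is 0.
   Hence every A <> 0 in Pos(H) is uniquely s rho with
   s = tr A > 0 and rho = A / tr A a density operator, i.e. the transpose
   (s, rho) |-> s rho of the inclusion is a bijection; since it is linear and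
   commutes with conjugation by unitaries, it is a natural isomorphism. *)

Section TransposeInclusion.
Variables (R : realType) (n : nat).
Local Notation C := R[i].
Implicit Types (u v : Selt R n) (A : 'M[C]_n).

Lemma sum_delta (F : 'I_n -> C) (i : 'I_n) : \sum_l F l * (l == i)%:R = F i.
Proof.
rewrite (bigD1 i) //= eqxx mulr1 big1 ?addr0 // => l /negbTE ->.
by rewrite mulr0.
Qed.

Definition vec2 (i j : 'I_n) (a b : C) : 'cV[C]_n :=
  \col_k (a * (k == i)%:R + b * (k == j)%:R).

Lemma qform_vec2 A i j a b :
  qform A (vec2 i j a b) =
  (A i i * a + A i j * b) * Num.conj a + (A j i * a + A j j * b) * Num.conj b.
Proof.
have Avec2 k : (A *m vec2 i j a b) k ord0 = A k i * a + A k j * b.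
  rewrite mxE; under eq_bigr do rewrite mxE mulrDr !mulrA.
  by rewrite big_split /= !sum_delta.
rewrite /qform.
under eq_bigr do
  rewrite Avec2 mxE rmorphD !rmorphM /= !rmorph_nat mulrDr !mulrA.
by rewrite big_split /= !sum_delta.
Qed.

Lemma qformZ (c : C) A x : qform (c *: A) x = c * qform A x.
Proof.
rewrite /qform mulr_sumr; apply: eq_bigr => k _.
by rewrite -scalemxAl mxE mulrA.
Qed.

Lemma qform0 x : qform (0 : 'M[C]_n) x = 0.
Proof. by rewrite /qform big1 // => k _; rewrite mul0mx mxE mul0r. Qed.

Lemma is_pos_rscale (s : R) A :
  0 <= s -> is_pos A -> is_pos (rscale s A).
Proof. by move=> s_ge0 posA x; rewrite /rscale qformZ mulr_ge0 // ler0c. Qed.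

Lemma pos_diag_ge0 A i : is_pos A -> 0 <= A i i.
Proof.
move=> /(_ (vec2 i i 1 0)); rewrite qform_vec2.
by rewrite !mulr1 !mulr0 !addr0 conjC0 conjC1 mulr0 addr0 mulr1.
Qed.

Lemma pos_trace_ge0 A : is_pos A -> 0 <= \tr A.
Proof. by move=> posA; rewrite sumr_ge0 // => i _; apply: pos_diag_ge0. Qed.

(* Positivity on e_i + c e_j with c = 1, -1, 'i forces
   A i j + A j i = 0 and A i j - A j i = 0. *)
Lemma pos_offdiag_eq0 A i j :
  is_pos A -> A i i = 0 -> A j j = 0 -> A i j = 0.
Proof.
move=> posA Aii0 Ajj0.
have test c : 0 <= c * A i j + Num.conj c * A j i.
  have := posA (vec2 i j 1 c).
  rewrite qform_vec2 Aii0 Ajj0 conjC1 !mulr1 !mul0r !add0r !addr0.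
  by rewrite mulrC [_ * Num.conj c]mulrC.
have sum0 : A i j + A j i = 0.
  apply/le_anti/andP; split; last by have := test 1; rewrite rmorph1 !mul1r.
  by have := test (-1); rewrite rmorphN rmorph1 !mulN1r -opprD oppr_ge0.
have diff0 c : Num.conj c = - c -> c * (A i j - A j i) = 0.
  move=> conjc; apply/le_anti/andP; split; last first.
    by have := test c; rewrite conjc mulNr mulrBr.
  have := test (- c); rewrite (rmorphN Num.conj) /= conjc opprK mulNr.
  by rewrite mulrBr addrC subr_ge0 subr_le0.
move/eqP: (diff0 'i (conjCi _)).
rewrite mulf_eq0 (negbTE (neq0Ci _)) /= subr_eq0 => /eqP Aji.
by move: sum0; rewrite Aji -mulr2n => /eqP; rewrite mulrn_eq0 /= => /eqP.
Qed.

Lemma pos_trace_eq0 A : is_pos A -> \tr A = 0 -> A = 0.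
Proof.
move=> posA /eqP; rewrite psumr_eq0 => [/allP diag0|k _];
  last exact: pos_diag_ge0.
have Aii0 i : A i i = 0 by apply/eqP/(implyP (diag0 i (mem_index_enum _))).
by apply/matrixP => i j; rewrite mxE pos_offdiag_eq0.
Qed.

Lemma rscaleK (s : R) : s != 0 -> cancel (@rscale R n s) (@rscale R n s^-1).
Proof.
by move=> s_neq0 A; rewrite /rscale scalerA -rmorphM mulVf // scale1r.
Qed.

Lemma trace_rscale (s : R) A : \tr (rscale s A) = (s%:C)%C * \tr A.
Proof. exact: mxtraceZ. Qed.

Lemma trace_transpose_incl u :
  S_valid u -> \tr (transpose_incl u) = if u is Spt s _ then (s%:C)%C else 0.
Proof.
case: u => [|s rho] /= => [_|[_ [_ tr1]]]; first exact: mxtrace0.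
by rewrite trace_rscale tr1 mulr1.
Qed.

Lemma transpose_incl_pos u : S_valid u -> is_pos (transpose_incl u).
Proof.
case: u => [|s rho] /= => [_ x|[s_gt0 [posrho _]]]; first by rewrite qform0.
exact: is_pos_rscale (ltW s_gt0) posrho.
Qed.

Lemma transpose_incl_add u v : S_valid u -> S_valid v ->
  transpose_incl (S_add u v) = transpose_incl u + transpose_incl v.
Proof.
case: u v => [|s x] [|t y] /=; rewrite ?add0r ?addr0 // => -[s_gt0 _] [t_gt0 _].
have st_neq0 : s + t != 0 by rewrite gt_eqF // addr_gt0.
rewrite /rscale scalerDr !scalerA -!rmorphM /=.
by rewrite !mulrA ![(s + t) * _]mulrC !mulfK.
Qed.

Lemma transpose_incl_scale (s : R) u :
  transpose_incl (S_scale s u) = rscale s (transpose_incl u).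
Proof.
case: u => [|t x] /=; first by rewrite /rscale scaler0.
case: eqP => [->|_] /=; first by rewrite /rscale rmorph0 scale0r.
by rewrite /rscale scalerA rmorphM.
Qed.

Lemma transpose_incl_inj u v : S_valid u -> S_valid v ->
  transpose_incl u = transpose_incl v -> u = v.
Proof.
move=> validu validv equv; have := congr1 mxtrace equv.
rewrite !trace_transpose_incl //.
have pos_neq0 (s : R) : 0 < s -> (s%:C)%C != 0 :> R[i].
  by move=> s_gt0; rewrite eq_complex /= gt_eqF.
case: u v validu validv equv => [|s x] [|t y] //.
- by move=> _ [t_gt0 _] _ /esym/eqP; rewrite (negbTE (pos_neq0 _ t_gt0)).
- by move=> [s_gt0 _] _ _ /eqP; rewrite (negbTE (pos_neq0 _ s_gt0)).
move=> [s_gt0 _] _ /= equv /complexI st; subst t.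
by rewrite -(rscaleK _ (lt0r_neq0 s_gt0) x) equv rscaleK // lt0r_neq0.
Qed.

Lemma transpose_incl_surj A : is_pos A ->
  exists2 u : Selt R n, S_valid u & transpose_incl u = A.
Proof.
move=> posA; have [tr0|tr_neq0] := eqVneq (\tr A) 0.
  by exists S0; rewrite //= (pos_trace_eq0 _ posA tr0).
have /ger0_Im trIm0 := pos_trace_ge0 _ posA.
set s := complex.Re (\tr A).
have trE : \tr A = (s%:C)%C by case: (\tr A) trIm0 @s => a b /= ->.
have s_gt0 : 0 < s.
  rewrite -(ltcR 0) trE in tr_neq0 *.
  by rewrite lt_def tr_neq0 -trE pos_trace_ge0.
exists (Spt s (rscale s^-1 A)); last first.
  by rewrite /= -[s in rscale s]invrK rscaleK // invr_neq0 // lt0r_neq0.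
split=> //; split; first by apply: is_pos_rscale => //; rewrite invr_ge0 ltW.
by rewrite trace_rscale trE -rmorphM mulVf ?gt_eqF.
Qed.

Lemma transpose_incl_natural (U : 'M[R[i]]_n) u :
  transpose_incl (S_map U u) = U *m transpose_incl u *m herm_adj U.
Proof.
case: u => [|s rho] /=; first by rewrite mulmx0 mul0mx.
by rewrite /rscale (scalemxAl _ (U *m rho)) (scalemxAr _ U rho).
Qed.

End TransposeInclusion.

Theorem theorem4p4 (R : realType) :
  forall n : nat,
    (forall u : Selt R n, S_valid u -> is_pos (transpose_incl u)) /\
    transpose_incl (@S0 R n) = 0 /\
    (forall u v : Selt R n, S_valid u -> S_valid v ->
       transpose_incl (S_add u v) = transpose_incl u + transpose_incl v) /\
    (forall (s : R) (u : Selt R n), 0 <= s -> S_valid u ->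
       transpose_incl (S_scale s u) = rscale s (transpose_incl u)) /\
    (forall u v : Selt R n, S_valid u -> S_valid v ->
       transpose_incl u = transpose_incl v -> u = v) /\
    (forall A : 'M[R[i]]_n, is_pos A ->
       exists2 u : Selt R n, S_valid u & transpose_incl u = A) /\
    (forall U : 'M[R[i]]_n, unitary_mx U ->
       forall u : Selt R n, S_valid u ->
         transpose_incl (S_map U u) = U *m transpose_incl u *m herm_adj U).
Proof.
move=> n; do !split.
- exact: transpose_incl_pos.
- exact: transpose_incl_add.
- by move=> s u _ _; apply: transpose_incl_scale.
- exact: transpose_incl_inj.
- exact: transpose_incl_surj.
- by move=> U _ u _; apply: transpose_incl_natural.
Qed.
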